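(* Let $B$ be a finite set of closed, bounded line segments in $\mathbb{R}^2$ and let $R(B)=\{p\in\mathbb{R}^2: \text{every line through } p \text{ intersects } B\}$. Then every maximal region $C\subseteq R(B)$ is an intersection of closed halfplanes, each bounded by a line that passes through two vertices (segment endpoints) of $B$.
   Context: A region is a bounded, closed, connected subset of $\mathbb{R}^2$. For a set $P\subseteq\mathbb{R}^2$, a maximal region of $P$ is a region $R$ such that for every point $p\in R$ there is an open ball $A$ centered at $p$ with $A\cap R = A\cap P$. The vertices of $B$ are the endpoints of its segments. A line intersects $B$ if it meets at least one segment of $B$. *)

(* points of R^2 are pairs in R * R, R : realType,
   with the product topology (= Euclidean topology). *)
From HB Require Import structures.
From mathcomp Require Import all_boot all_order all_algebra.
From mathcomp Require Import all_classical all_reals all_analysis.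
Set Implicit Arguments. Unset Strict Implicit. Unset Printing Implicit Defensive.
Import Order.TTheory GRing.Theory Num.Theory.
Import numFieldNormedType.Exports.
Local Open Scope classical_set_scope.
Local Open Scope ring_scope.

Section Defs.
Variable R : realType.
Notation pt := (R * R)%type.

Definition segment (s : pt * pt) : set pt :=
  [set p | exists t : R, 0 <= t <= 1 /\
     p = ((1 - t) * s.1.1 + t * s.2.1, (1 - t) * s.1.2 + t * s.2.2)].

Definition on_line (u : pt) (c : R) (p : pt) : Prop :=
  u.1 * p.1 + u.2 * p.2 = c.

Definition line_meets (B : seq (pt * pt)) (u : pt) (c : R) : Prop :=
  exists2 s, s \in B & exists2 q, segment s q & on_line u c q.

Definition RB (B : seq (pt * pt)) : set pt :=
  [set p | forall (u : pt) (c : R), u != 0 -> on_line u c p -> line_meets B u c].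

Definition vertex (B : seq (pt * pt)) (v : pt) : Prop :=
  exists2 s, s \in B & (v = s.1 \/ v = s.2).

Definition oball (p : pt) (r : R) : set pt :=
  [set q | (q.1 - p.1) ^+ 2 + (q.2 - p.2) ^+ 2 < r ^+ 2].

Definition region (C : set pt) : Prop :=
  C !=set0 /\
  (exists M : R, forall p, C p -> `|p.1| <= M /\ `|p.2| <= M) /\
  closed C /\ connected C.

Definition maximal_region (P C : set pt) : Prop :=
  region C /\
  forall p, C p -> exists2 r : R, 0 < r & oball p r `&` C = oball p r `&` P.

Definition halfplane (u : pt) (c : R) : set pt :=
  [set p | u.1 * p.1 + u.2 * p.2 <= c].

Definition vertex_halfplane (B : seq (pt * pt)) (h : set pt) : Prop :=
  exists (u : pt) (c : R) (v w : pt), [/\ u != 0, h = halfplane u c,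
    vertex B v /\ vertex B w, v != w & on_line u c v /\ on_line u c w].

Definition collinear (a b c : pt) : Prop :=
  (b.1 - a.1) * (c.2 - a.2) - (b.2 - a.2) * (c.1 - a.1) = 0.

End Defs.

From HB Require Import structures.
From mathcomp Require Import all_boot all_order all_algebra.
From mathcomp Require Import all_classical all_reals all_analysis.
From mathcomp Require Import ring lra.
Set Implicit Arguments. Unset Strict Implicit. Unset Printing Implicit Defensive.
Import Order.TTheory GRing.Theory Num.Theory.
Import numFieldNormedType.Exports.
Local Open Scope classical_set_scope.
Local Open Scope ring_scope.

(** Let [p] lie in every vertex halfplane containing [C], and suppose [p] is not in [C].
    Since [C] is open and closed in R(B), the segment from a point of [C] to [p] leaves
    R(B), so some line misses [B] and separates [C] from [p]; the separation is strict
    on the side of [C] because [C] is connected and every line through a point of [C]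
    meets [B].  Let [v0] be the highest vertex below that line: the parallel through
    [v0] still has [C] below it.  Now rotate this line about [v0] towards [p] until it
    meets a second vertex.  No point of [C] can cross the rotating line, for a slight
    tilt of a line through such a point and [v0] would give a line through it missing
    [B].  Since the vertices are not collinear, one of the two rotation directions does
    meet a vertex before reaching [p], and the final line bounds a vertex halfplane
    containing [C] but not [p]. *)

Section SeqExtremum.
Variables (T : eqType) (disp : Order.disp_t) (X : orderType disp).

Lemma seq_argmax (l : seq T) (f : T -> X) :
  l != [::] -> exists2 x, x \in l & forall y, y \in l -> (f y <= f x)%O.
Proof.
elim: l => [//|a l IH] _; have [-> | /IH [x xl xmax]] := eqVneq l [::].
  by exists a => [|y]; rewrite ?mem_seq1 ?inE // => /eqP ->.
have [fxa | fax] := leP (f x) (f a).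
  exists a; first exact: mem_head.
  by move=> y; rewrite inE => /orP[/eqP -> // | /xmax /le_trans]; apply.
exists x; first by rewrite inE xl orbT.
by move=> y; rewrite inE => /orP[/eqP -> | /xmax //]; exact: ltW.
Qed.

End SeqExtremum.

Lemma seq_pos_lower_bound (T : eqType) (R : realDomainType) (l : seq T) (g : T -> R) :
  (forall x, x \in l -> 0 < g x) -> exists2 e : R, 0 < e & forall x, x \in l -> e <= g x.
Proof.
have [-> _ | l0 gl] := eqVneq l [::]; first by exists 1.
have [x xl xmin] := @seq_argmax _ _ R^d l g l0.
by exists (g x) => [|y /xmin]; first exact: gl.
Qed.

Lemma seq_small_multiplier (T : eqType) (R : realFieldType) (l : seq T) (a b : T -> R) :
  (forall x, x \in l -> a x != 0) ->
  exists2 e : R, 0 < e & forall x, x \in l -> `|e * b x| < `|a x|.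
Proof.
move=> anz; have bpos x : 0 < `|b x| + 1 by rewrite ltr_wpDl.
have [e e0 le] : exists2 e : R, 0 < e & forall x, x \in l -> e <= `|a x| / (`|b x| + 1).
  by apply: seq_pos_lower_bound => x xl; rewrite divr_gt0 ?normr_gt0 ?anz.
exists e => // x /le; rewrite ler_pdivlMr // normrM (gtr0_norm e0) mulrDr mulr1.
by apply: lt_le_trans; rewrite ltrDl.
Qed.

Section Interpolation.
Variable R : realFieldType.
Implicit Types a b k t A B : R.

(* The parameter at which [(1 - t) * A + t * B] vanishes. *)
Definition cross A B : R := A / (A - B).

Lemma lerp_lt t a b k : 0 <= t <= 1 -> a < k -> b < k -> (1 - t) * a + t * b < k.
Proof.
move=> /andP[t0 t1] ak bk.
have [-> | tn1] := eqVneq t 1; first by rewrite subrr mul0r add0r mul1r.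
have : 0 < (1 - t) * (k - a) by rewrite mulr_gt0 // subr_gt0 // lt_neqAle tn1.
have : 0 <= t * (k - b) by rewrite mulr_ge0 // subr_ge0 ltW.
lra.
Qed.

Lemma lerp_gt t a b k : 0 <= t <= 1 -> k < a -> k < b -> k < (1 - t) * a + t * b.
Proof.
move=> t01; rewrite -(ltrN2 a) -(ltrN2 b) => ak bk.
by have := lerp_lt t01 ak bk; lra.
Qed.

Lemma lerp_root a b k : a < k -> k < b -> exists2 t, 0 <= t <= 1 & (1 - t) * a + t * b = k.
Proof.
move=> ak kb; have ba : 0 < b - a by lra.
exists ((k - a) / (b - a)); last by field; rewrite lt0r_neq0.
by apply/andP; split; [apply: divr_ge0 | rewrite ler_pdivrMr // mul1r]; lra.
Qed.

Lemma lerp_sameside a b k : (forall t, 0 <= t <= 1 -> (1 - t) * a + t * b != k) ->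
  (a < k /\ b < k) \/ (k < a /\ k < b).
Proof.
move=> nok.
have ak : a != k by have := nok 0; rewrite subr0 mul1r mul0r addr0 lexx ler01; apply.
have bk : b != k by have := nok 1; rewrite subrr mul0r add0r mul1r lexx ler01; apply.
have [alt | agt] := ltP a k; have [blt | bgt] := ltP b k.
- by left.
- have kb : k < b by rewrite lt_neqAle eq_sym bk.
  have [t t01 e] := lerp_root alt kb.
  by move: (nok t t01); rewrite e eqxx.
- have ka : k < a by rewrite lt_neqAle eq_sym ak.
  have [t /andP[t0 t1] e] := lerp_root blt ka.
  have t01 : 0 <= 1 - t <= 1 by apply/andP; lra.
  have e' : (1 - (1 - t)) * a + (1 - t) * b = k by rewrite -e; ring.
  by move: (nok _ t01); rewrite e' eqxx.
- by right; rewrite !lt_neqAle eq_sym ak eq_sym bk.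
Qed.

Lemma lerp_cross A B : A != B -> (1 - cross A B) * A + cross A B * B = 0.
Proof. by move=> AB; rewrite /cross; field; rewrite subr_eq0. Qed.

Lemma cross_in01 A B : A * B < 0 -> 0 < cross A B < 1.
Proof.
rewrite /cross => AB; have [A0 | A0 | A0] := ltgtP A 0; last by move: AB; rewrite A0 mul0r ltxx.
- have B0 : 0 < B by rewrite -(nmulr_rlt0 _ A0).
  have -> : A / (A - B) = - A / (B - A) by rewrite -opprB invrN mulrN mulNr.
  by apply/andP; split; [apply: divr_gt0 | rewrite ltr_pdivrMr ?mul1r]; lra.
- have B0 : B < 0 by rewrite -(pmulr_rlt0 _ A0).
  by apply/andP; split; [apply: divr_gt0 | rewrite ltr_pdivrMr ?mul1r]; lra.
Qed.

Lemma mul_lt0_neq A B : A * B < 0 -> A != B.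
Proof. by apply: contraTneq => <-; rewrite -leNgt -expr2 sqr_ge0. Qed.

Lemma lerp_sign_before_cross A B t : A != 0 -> 0 <= t < 1 ->
  (A * B < 0 -> t < cross A B) -> 0 < A * ((1 - t) * A + t * B).
Proof.
rewrite /cross => A0 /andP[t0 t1] tcross.
have AA : 0 < A * A by rewrite -expr2 exprn_even_gt0.
have [AB | AB] := ltP (A * B) 0.
  have AAB : 0 < A * (A - B) by rewrite mulrBr; lra.
  have AnB := mul_lt0_neq AB.
  have -> : A * ((1 - t) * A + t * B) = (A * (A - B)) * (A / (A - B) - t).
    by field; rewrite subr_eq0.
  by rewrite mulr_gt0 // subr_gt0 tcross.
have : 0 < (1 - t) * (A * A) by rewrite mulr_gt0 // subr_gt0.
have : 0 <= t * (A * B) by rewrite mulr_ge0.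
lra.
Qed.

Lemma lerp_root_before A B s : A <= 0 -> 0 < s -> 0 < (1 - s) * A + s * B ->
  exists t, [/\ 0 <= t, t < s & (1 - t) * A + t * B = 0].
Proof.
move=> A0 s0 pos; have [-> | An0] := eqVneq A 0; first by exists 0; split=> //; ring.
have BA : 0 < B - A by rewrite -(pmulr_rgt0 _ s0); lra.
have AnB : A != B by rewrite eq_sym -subr_eq0 gt_eqF.
exists (cross A B); split; last exact: lerp_cross.
- by rewrite /cross -opprB invrN mulrN -mulNr divr_ge0 // ?oppr_ge0 // ltW.
- by rewrite /cross -opprB invrN mulrN -mulNr ltr_pdivrMr //; lra.
Qed.

Lemma addr_small_gt0 A e : `|e| < `|A| -> 0 < A -> 0 < A + e.
Proof.
by move=> eA A0; rewrite (gtr0_norm A0) in eA; have := ler_norm (- e); rewrite normrN; lra.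
Qed.

Lemma addr_small_lt0 A e : `|e| < `|A| -> A < 0 -> A + e < 0.
Proof. by move=> eA A0; rewrite (ltr0_norm A0) in eA; have := ler_norm e; lra. Qed.

End Interpolation.

Section Connectedness.
Variables (T : topologicalType) (R : realType).

Lemma connected_sub_locally_equal (P C S : set T) :
  closed C ->
  (forall x, C x -> exists2 U, open_nbhs x U & U `&` C = U `&` P) ->
  connected S -> S `<=` P -> S `&` C !=set0 -> S `<=` C.
Proof.
move=> clC locC cS SP SC0.
pose U := \bigcup_(V in [set V | open V /\ V `&` C = V `&` P]) V.
suff SCS : S `&` C = S by move=> x Sx; rewrite -SCS in Sx; case: Sx.
apply: cS => //; last by exists C.
exists U; first by apply: bigcup_open => V [].
apply/seteqP; split=> x.
  move=> [Sx Cx]; split=> //; have [V [oV Vx] VC] := locC x Cx.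
  by exists V.
move=> [Sx [V [oV VC] Vx]]; split=> //.
have : (V `&` P) x by split=> //; exact: SP.
by rewrite -VC => -[].
Qed.

Lemma connected_lt (f : T -> R) (C : set T) (d : R) :
  continuous f -> connected C -> (exists2 c, C c & f c < d) ->
  (forall c, C c -> f c != d) -> forall c, C c -> f c < d.
Proof.
move=> cf cC [c0 Cc0 c0d] Cd.
suff CltC : C `&` (f @^-1` [set y | y < d]) = C.
  by move=> c Cc; rewrite -CltC in Cc; case: Cc.
apply: cC; first by exists c0.
  by exists (f @^-1` [set y | y < d]) => //; apply: open_comp => // x _; exact: cf.
exists (f @^-1` [set y | y <= d]); first by apply: preimage_closed => // x _; exact: cf.
apply/seteqP; split=> x [Cx fx]; split=> //=; first exact: ltW.
by rewrite lt_neqAle Cd.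
Qed.

End Connectedness.

Section Plane.
Variable R : realType.
Notation pt := (R * R)%type.

Definition dot (u x : pt) : R := u.1 * x.1 + u.2 * x.2.

Lemma dotDl (u v x : pt) : dot (u + v) x = dot u x + dot v x.
Proof. by rewrite /dot /=; ring. Qed.

Lemma dotZl (e : R) (u x : pt) : dot (e *: u) x = e * dot u x.
Proof.
by rewrite /dot; change (e * u.1 * x.1 + e * u.2 * x.2 = e * dot u x); rewrite /dot; ring.
Qed.

Lemma dotNl (u x : pt) : dot (- u) x = - dot u x.
Proof. by rewrite /dot /=; ring. Qed.

Lemma dotNr (u x : pt) : dot u (- x) = - dot u x.
Proof. by rewrite /dot /=; ring. Qed.

Lemma dotBr (u x y : pt) : dot u (x - y) = dot u x - dot u y.
Proof. by rewrite /dot /=; ring. Qed.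

Lemma dot_neq0 (u x y : pt) : dot u x != dot u y -> u != 0.
Proof. by apply: contra_neq => ->; rewrite /dot /= !mul0r addr0. Qed.

Lemma dot_self_gt0 (u : pt) : u != 0 -> 0 < dot u u.
Proof.
case: u => a b; rewrite xpair_eqE negb_and /dot /= -!expr2 => ab.
have sq_gt0 (x : R) : x != 0 -> 0 < x ^+ 2 by move=> x0; rewrite lt0r sqrf_eq0 x0 sqr_ge0.
have := sqr_ge0 a; have := sqr_ge0 b.
by case/orP: ab => /sq_gt0; lra.
Qed.

Definition lerp (a b : pt) (t : R) : pt :=
  ((1 - t) * a.1 + t * b.1, (1 - t) * a.2 + t * b.2).

Lemma lerp0 (a b : pt) : lerp a b 0 = a.
Proof. by rewrite /lerp subr0 !mul1r !mul0r !addr0; case: a. Qed.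

Lemma lerp1 (a b : pt) : lerp a b 1 = b.
Proof. by rewrite /lerp subrr !mul0r !mul1r !add0r; case: b. Qed.

Lemma dot_lerpl (a b x : pt) t : dot (lerp a b t) x = (1 - t) * dot a x + t * dot b x.
Proof. by rewrite /dot /=; ring. Qed.

Lemma dot_lerpr (u a b : pt) t : dot u (lerp a b t) = (1 - t) * dot u a + t * dot u b.
Proof. by rewrite /dot /=; ring. Qed.

Lemma dot_sub_lerpl (a b x y : pt) t :
  dot (lerp a b t) x - dot (lerp a b t) y = (1 - t) * (dot a x - dot a y) + t * (dot b x - dot b y).
Proof. by rewrite !dot_lerpl; ring. Qed.

Lemma dot_continuous (u : pt) : continuous (dot u).
Proof.
move=> x; apply: cvgD; apply: cvgM;
  [exact: cvg_cst | exact: cvg_fst | exact: cvg_cst | exact: cvg_snd].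
Qed.

Lemma lerp_continuous (a b : pt) : continuous (lerp a b).
Proof.
move=> t; apply: (@cvg_pair _ _ _ _ (nbhs (lerp a b t).1) (nbhs (lerp a b t).2));
  apply: cvgD; apply: cvgM;
  (exact: cvg_cst || exact: cvg_id || (apply: cvgB; [exact: cvg_cst | exact: cvg_id])).
Qed.

Lemma connected_lerp (a b : pt) : connected (lerp a b @` `[0, 1]).
Proof.
apply: connected_continuous_connected; first exact: segment_connected.
by apply: continuous_subspaceT; exact: lerp_continuous.
Qed.

Lemma open_oball (p : pt) r : open (oball p r).
Proof.
have -> : oball p r = (fun x : pt => dot (x - p) (x - p)) @^-1` [set y | y < r ^+ 2].
  by rewrite /oball /dot /= !expr2.
apply: open_comp; last exact: open_lt.
move=> x _; apply: cvgD; apply: cvgM; apply: cvgB;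
  (exact: cvg_fst || exact: cvg_snd || exact: cvg_cst).
Qed.

Lemma oball_center (p : pt) r : 0 < r -> oball p r p.
Proof. by move=> r0; rewrite /oball /= !subrr expr0n /= add0r exprn_gt0. Qed.

Lemma maximal_region_sub (P C : set pt) : maximal_region P C -> C `<=` P.
Proof.
move=> [_ loc] x Cx; have [r r0 CP] := loc x Cx.
have : (oball x r `&` C) x by split=> //; exact: oball_center.
by rewrite CP => -[].
Qed.

Lemma maximal_region_locally_equal (P C : set pt) : maximal_region P C ->
  forall x, C x -> exists2 U, open_nbhs x U & U `&` C = U `&` P.
Proof.
move=> [_ loc] x Cx; have [r r0 CP] := loc x Cx.
by exists (oball x r) => //; split; [exact: open_oball | exact: oball_center].
Qed.

Lemma segment_fst (s : pt * pt) : segment s s.1.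
Proof. by exists 0; split; [rewrite lexx ler01 | exact: esym (lerp0 s.1 s.2)]. Qed.

Lemma segment_snd (s : pt * pt) : segment s s.2.
Proof. by exists 1; split; [rewrite lexx ler01 | exact: esym (lerp1 s.1 s.2)]. Qed.

Lemma dot_segment (u : pt) s q : segment s q ->
  exists2 t, 0 <= t <= 1 & dot u q = (1 - t) * dot u s.1 + t * dot u s.2.
Proof. by move=> [t [t01 ->]]; exists t; last exact: dot_lerpr. Qed.

Definition sameside (u : pt) (k : R) (s : pt * pt) : Prop :=
  (dot u s.1 < k /\ dot u s.2 < k) \/ (k < dot u s.1 /\ k < dot u s.2).

Lemma sameside_of_not_meets (u : pt) k s :
  ~ (exists2 q, segment s q & on_line u k q) -> sameside u k s.
Proof.
move=> nq; apply: lerp_sameside => t t01; apply/eqP => e; apply: nq.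
by exists (lerp s.1 s.2 t); [exists t | rewrite /on_line -/(dot _ _) dot_lerpr].
Qed.

Lemma not_line_meets_of_sameside B (u : pt) k :
  (forall s, s \in B -> sameside u k s) -> ~ line_meets B u k.
Proof.
move=> ss [s sB [q sq]]; rewrite /on_line -/(dot _ _) => qk.
have [t t01 qE] := dot_segment u sq; rewrite qE in qk.
case: (ss s sB) => [[s1k s2k] | [s1k s2k]].
  by have := lerp_lt t01 s1k s2k; rewrite qk ltxx.
by have := lerp_gt t01 s1k s2k; rewrite qk ltxx.
Qed.

Lemma line_meetsN B (u : pt) k : line_meets B (- u) (- k) <-> line_meets B u k.
Proof.
have onN q : on_line (- u) (- k) q <-> on_line u k q.
  by rewrite /on_line -!/(dot _ _) dotNl; split=> [/oppr_inj | ->].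
by split=> [] [s sB [q sq /onN qk]]; exists s => //; exists q.
Qed.

Lemma RB_line_meets B x (u : pt) : RB B x -> u != 0 -> line_meets B u (dot u x).
Proof. by move=> Rx u0; apply: Rx. Qed.

Definition vertices (B : seq (pt * pt)) : seq pt := flatten [seq [:: s.1; s.2] | s <- B].

Lemma verticesP B v : vertex B v <-> v \in vertices B.
Proof.
split=> [[s sB sv] | /flatten_mapP [s sB]].
  by apply/flatten_mapP; exists s => //; case: sv => ->; rewrite !inE eqxx ?orbT.
by rewrite !inE => /orP[] /eqP ->; exists s => //; [left | right].
Qed.

Lemma vertices_fst B s : s \in B -> s.1 \in vertices B.
Proof. by move=> sB; apply/verticesP; exists s => //; left. Qed.

Lemma vertices_snd B s : s \in B -> s.2 \in vertices B.
Proof. by move=> sB; apply/verticesP; exists s => //; right. Qed.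

Lemma vertices_on_segment B v : v \in vertices B -> exists2 s, s \in B & segment s v.
Proof.
by move=> /verticesP [s sB [-> | ->]]; exists s => //; [exact: segment_fst | exact: segment_snd].
Qed.

Lemma exists_normal (a b : pt) : a != b -> exists2 K : pt, K != 0 & dot K a = dot K b.
Proof.
move=> ab; exists (b.2 - a.2, a.1 - b.1); last by rewrite /dot /=; ring.
move: ab; case: a b => [a1 a2] [b1 b2]; apply: contra_neq.
move=> /(congr1 (fun x : pt => (x.1, x.2))) /= [].
by move=> /eqP; rewrite subr_eq0 => /eqP -> /eqP; rewrite subr_eq0 => /eqP ->.
Qed.

Lemma collinear_on_line (K a b c : pt) k : K != 0 ->
  dot K a = k -> dot K b = k -> dot K c = k -> collinear a b c.
Proof.
case: K => K1 K2 K0 ha hb hc; rewrite /collinear.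
set X := (_ * _ - _ * _).
have e1 : K1 * X = (c.2 - a.2) * (dot (K1, K2) b - dot (K1, K2) a)
                   - (b.2 - a.2) * (dot (K1, K2) c - dot (K1, K2) a) by rewrite /X /dot /=; ring.
have e2 : K2 * X = (b.1 - a.1) * (dot (K1, K2) c - dot (K1, K2) a)
                   - (c.1 - a.1) * (dot (K1, K2) b - dot (K1, K2) a) by rewrite /X /dot /=; ring.
rewrite ha hb hc subrr !mulr0 subrr in e1 e2.
move: K0; rewrite xpair_eqE negb_and => /orP[] K0.
  by move/eqP: e1; rewrite mulf_eq0 (negbTE K0) => /eqP.
by move/eqP: e2; rewrite mulf_eq0 (negbTE K0) => /eqP.
Qed.

Lemma exists_vertex_off_line B (K : pt) k :
  (exists a b c, [/\ vertex B a, vertex B b, vertex B c & ~ collinear a b c]) ->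
  K != 0 -> exists2 w, w \in vertices B & dot K w != k.
Proof.
move=> [a [b [c [va vb vc nc]]]] K0; apply: contrapT => nw; apply: nc.
have onK v : vertex B v -> dot K v = k.
  by move=> vv; apply: contra_notP nw => vk; exists v; [exact/verticesP | exact/eqP].
exact: collinear_on_line K0 (onK _ va) (onK _ vb) (onK _ vc).
Qed.

Definition side_compatible (u : pt) (d : R) (n : pt) (k : R) (w : pt) : Prop :=
  (dot u w < d -> dot n w < k) /\ (d < dot u w -> k < dot n w).

Lemma not_line_meets_compatible B (u : pt) d (n : pt) k :
  (forall s, s \in B -> sameside u d s) ->
  (forall w, w \in vertices B -> side_compatible u d n k w) ->
  ~ line_meets B n k.
Proof.
move=> ss comp; apply: not_line_meets_of_sameside => s sB.
have [c1 c2] := comp _ (vertices_fst sB); have [d1 d2] := comp _ (vertices_snd sB).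
by case: (ss s sB) => [[] | []]; [left | right]; auto.
Qed.

Section Pivot.
Variables (B : seq (pt * pt)) (C : set pt) (u : pt) (d : R) (v0 : pt).
Hypotheses (CR : C `<=` RB B) (ss : forall s, s \in B -> sameside u d s).
Hypotheses (v0V : v0 \in vertices B) (v0d : dot u v0 < d).
Hypothesis v0_top : forall w, w \in vertices B -> w != v0 -> dot u w < dot u v0 \/ d < dot u w.
Hypothesis C_below : forall c, C c -> dot u c <= dot u v0.

Definition pivot_compatible (n : pt) : Prop :=
  forall w, w \in vertices B -> w != v0 -> side_compatible u d n (dot n v0) w.

Lemma vertex_off_pivot_level w : w \in vertices B -> w != v0 ->
  (dot u w - dot u v0 < 0 /\ dot u w < d) \/ (0 < dot u w - dot u v0 /\ d < dot u w).
Proof.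
move=> wV wv0; case: (v0_top wV wv0) => wd; [left | right]; rewrite ?subr_lt0 ?subr_gt0.
  by split=> //; exact: lt_trans v0d.
by split=> //; exact: lt_trans wd.
Qed.

(* Tilting the line [(n, dot n v0)] slightly about [c], towards [c - v0], pushes [v0]
   strictly below it and keeps every other vertex on its side: the tilted line through
   [c] would then miss [B]. *)
Lemma pivot_compatible_meets_C n c :
  pivot_compatible n -> C c -> dot n c = dot n v0 -> c = v0.
Proof.
move=> comp Cc ncv; apply: contrapT => /eqP cv0.
pose Q := c - v0; have QQ : 0 < dot Q Q by apply: dot_self_gt0; rewrite subr_eq0.
have nz w : w \in [seq w <- vertices B | w != v0] -> dot n w - dot n v0 != 0.
  rewrite mem_filter => /andP[wv0 wV]; have [lt gt] := comp w wV wv0.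
  rewrite subr_eq0; case: (vertex_off_pivot_level wV wv0) => [[_ /lt] | [_ /gt]] h.
    by rewrite lt_eqF.
  by rewrite gt_eqF.
have [e e0 small] := seq_small_multiplier (fun w => dot Q (w - c)) nz.
pose m := n + e *: Q.
have dm x : dot m x - dot m c = (dot n x - dot n v0) + e * dot Q (x - c).
  by rewrite !(dotDl n) !dotZl ncv dotBr; ring.
have mv0 : dot m v0 < dot m c.
  by rewrite -subr_lt0 dm subrr add0r -opprB dotNr mulrN oppr_lt0 mulr_gt0.
have m0 : m != 0 by apply: (@dot_neq0 _ v0 c); rewrite lt_eqF.
apply: (not_line_meets_compatible ss) (RB_line_meets (CR Cc) m0) => w wV.
have [-> | wv0] := eqVneq w v0; first by split=> // /(lt_trans v0d); rewrite ltxx.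
have [lt gt] := comp w wV wv0.
have wl : w \in [seq w <- vertices B | w != v0] by rewrite mem_filter wv0.
split=> [/lt | /gt] h.
  by rewrite -subr_lt0 dm addr_small_lt0 ?small ?subr_lt0.
by rewrite -subr_gt0 dm addr_small_gt0 ?small ?subr_gt0.
Qed.

Lemma lerp_pivot_compatible (K : pt) t : 0 <= t < 1 ->
  (forall w, w \in vertices B -> w != v0 ->
     (dot u w - dot u v0) * (dot K w - dot K v0) < 0 ->
     t < cross (dot u w - dot u v0) (dot K w - dot K v0)) ->
  pivot_compatible (lerp u K t).
Proof.
move=> t01 before w wV wv0.
have sgn : 0 < (dot u w - dot u v0) * (dot (lerp u K t) w - dot (lerp u K t) v0).
  rewrite dot_sub_lerpl; apply: lerp_sign_before_cross t01 (before w wV wv0).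
  case: (vertex_off_pivot_level wV wv0) => [[h _] | [h _]].
    exact: ltr0_neq0.
  exact: lt0r_neq0.
case: (vertex_off_pivot_level wV wv0) => [[h wd] | [h wd]].
  rewrite (nmulr_rgt0 _ h) subr_lt0 in sgn.
  by split=> [_ // | /(lt_trans wd)]; rewrite ltxx.
rewrite (pmulr_rgt0 _ h) subr_gt0 in sgn.
by split=> [/(lt_trans wd) | _ //]; rewrite ltxx.
Qed.

(* The normal turns from [u] towards [K]; at time [ts] the line through [v0] reaches the
   first vertex [ws] that changes side. *)
Lemma pivot_halfplane (K p : pt) : dot K p = dot K v0 -> dot u v0 < dot u p ->
  (exists2 w, w \in vertices B &
     (w != v0) && ((dot u w - dot u v0) * (dot K w - dot K v0) < 0)) ->
  exists h, [/\ vertex_halfplane B h, C `<=` h & ~ h p].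
Proof.
move=> Kp v0p [w0 w0V w0neg].
pose l := [seq w <- vertices B |
  (w != v0) && ((dot u w - dot u v0) * (dot K w - dot K v0) < 0)].
have w0l : w0 \in l by rewrite mem_filter w0neg.
have l0 : l != [::] by apply: contraTneq w0l => ->.
have [ws wsl wsmin] := @seq_argmax _ _ R^d l
  (fun w => cross (dot u w - dot u v0) (dot K w - dot K v0)) l0.
move: wsl; rewrite mem_filter => /andP[/andP[wsv0 wsneg] wsV].
pose ts := cross (dot u ws - dot u v0) (dot K ws - dot K v0).
have /andP[ts0 ts1] : 0 < ts < 1 := cross_in01 wsneg.
have comp t : 0 <= t < ts -> pivot_compatible (lerp u K t).
  move=> /andP[t0 tts]; apply: lerp_pivot_compatible => [|w wV wv0 wneg].
    by rewrite t0 (lt_trans tts ts1).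
  by apply: (lt_le_trans tts); apply: wsmin; rewrite mem_filter wv0 wneg.
pose n := lerp u K ts.
have np : dot n v0 < dot n p.
  by rewrite -subr_gt0 dot_sub_lerpl Kp subrr mulr0 addr0 mulr_gt0 ?subr_gt0.
exists (halfplane n (dot n v0)); split.
- exists n, (dot n v0), v0, ws; split=> //.
  + by apply: (@dot_neq0 _ v0 p); rewrite lt_eqF.
  + by split; apply/verticesP.
  + by rewrite eq_sym.
  + split=> //; apply/eqP; rewrite -subr_eq0 -/(dot n ws) dot_sub_lerpl.
    by rewrite lerp_cross ?mul_lt0_neq.
- move=> c Cc; rewrite /halfplane /= -/(dot n c) leNgt; apply/negP => cn.
  have Ac : dot u c - dot u v0 <= 0 by rewrite subr_le0 C_below.
  have : 0 < (1 - ts) * (dot u c - dot u v0) + ts * (dot K c - dot K v0).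
    by rewrite -dot_sub_lerpl subr_gt0.
  move=> /(lerp_root_before Ac ts0) [tc [tc0 tcts tcE]].
  have cv0 : c = v0.
    apply: (pivot_compatible_meets_C (comp tc _) Cc); first by rewrite tc0 tcts.
    by apply/eqP; rewrite -subr_eq0 dot_sub_lerpl tcE.
  by move: cn; rewrite cv0 ltxx.
- by rewrite /halfplane /= -/(dot n p) leNgt np.
Qed.

End Pivot.

Section Separation.
Variables (B : seq (pt * pt)) (C : set pt) (u : pt) (d : R) (c0 : pt).
Hypotheses (CR : C `<=` RB B) (Cc0 : C c0) (u0 : u != 0) (nl : ~ line_meets B u d).
Hypothesis C_below : forall c, C c -> dot u c < d.

Lemma segments_sameside s : s \in B -> sameside u d s.
Proof.
by move=> sB; apply: sameside_of_not_meets => -[q sq qd]; apply: nl; exists s => //; exists q.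
Qed.

Lemma vertices_off_line w : w \in vertices B -> dot u w != d.
Proof.
by move=> /vertices_on_segment [s sB sw]; apply/eqP => wd; apply: nl; exists s => //; exists w.
Qed.

Lemma exists_pivot : exists v0, [/\ v0 \in vertices B, dot u v0 < d,
  forall w, w \in vertices B -> dot u w < d -> dot u w <= dot u v0 &
  forall c, C c -> dot u c <= dot u v0].
Proof.
pose l := [seq w <- vertices B | dot u w < d].
have l0 : l != [::].
  have [s sB [q sq qc0]] := RB_line_meets (CR Cc0) u0.
  suff s1l : s.1 \in l by apply: contraTneq s1l => ->.
  rewrite mem_filter vertices_fst // andbT.
  case: (segments_sameside sB) => [[] // | [s1d s2d]].
  have [t t01 qE] := dot_segment u sq; have := lerp_gt t01 s1d s2d.
  by rewrite -qE [dot u q]qc0 => /(lt_trans (C_below Cc0)); rewrite ltxx.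
have [v0 v0l v0max] := seq_argmax (dot u) l0.
move: v0l; rewrite mem_filter => /andP[v0d v0V].
have below w : w \in vertices B -> dot u w < d -> dot u w <= dot u v0.
  by move=> wV wd; apply: v0max; rewrite mem_filter wd.
(* a line parallel to [(u, d)] through a point of [C] above [v0] would miss [B] *)
exists v0; split=> // c Cc; rewrite leNgt; apply/negP => v0c.
apply: (not_line_meets_compatible segments_sameside)
  (RB_line_meets (CR Cc) u0) => w wV.
by split=> wd; [exact: le_lt_trans (below w wV wd) v0c | exact: lt_trans (C_below Cc) wd].
Qed.

Lemma separating_vertex_halfplane p :
  (exists a b c, [/\ vertex B a, vertex B b, vertex B c & ~ collinear a b c]) ->
  d <= dot u p -> exists h, [/\ vertex_halfplane B h, C `<=` h & ~ h p].
Proof.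
move=> hnc dp; have [v0 [v0V v0d v0max C_v0]] := exists_pivot.
have v0p : dot u v0 < dot u p := lt_le_trans v0d dp.
have notin_p (n : pt) : dot n v0 < dot n p -> ~ halfplane n (dot n v0) p.
  by move=> np; rewrite /halfplane /= -/(dot n p) leNgt np.
have [[w [wV wv0 wlevel]] | no_level] :=
  pselect (exists w, [/\ w \in vertices B, w != v0 & dot u w = dot u v0]).
  exists (halfplane u (dot u v0)); split=> //; last exact: notin_p.
  by exists u, (dot u v0), v0, w; split=> //; [split; apply/verticesP | rewrite eq_sym].
have v0_top w : w \in vertices B -> w != v0 -> dot u w < dot u v0 \/ d < dot u w.
  move=> wV wv0; have [wd | dw] := ltP (dot u w) d; last first.
    by right; rewrite lt_neqAle eq_sym vertices_off_line.
  left; rewrite lt_neqAle v0max // andbT; apply/eqP => wlevel.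
  by apply: no_level; exists w.
have [K K0 Kp] : exists2 K : pt, K != 0 & dot K p = dot K v0.
  by apply: exists_normal; apply: contraTneq v0p => ->; rewrite ltxx.
have [w wV wK] := exists_vertex_off_line (dot K v0) hnc K0.
have wv0 : w != v0 by apply: contra_neq wK => ->.
have Aw : dot u w - dot u v0 != 0.
  by rewrite subr_eq0; case: (v0_top w wV wv0) => [/lt_eqF -> | /(lt_trans v0d) /gt_eqF ->].
have Bw : dot K w - dot K v0 != 0 by rewrite subr_eq0.
have pivot := pivot_halfplane CR segments_sameside v0V v0d v0_top C_v0.
(* [w] is off the line [v0 p], so the rotation towards [K] or towards [- K] reaches [w]
   before that line. *)
have [neg | pos] := ltP ((dot u w - dot u v0) * (dot K w - dot K v0)) 0.
  by apply: pivot Kp v0p _; exists w; rewrite ?wv0.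
apply: (pivot (- K) p _ v0p); first by rewrite !dotNl Kp.
exists w => //; rewrite wv0 !dotNl -opprD mulrN oppr_lt0.
by rewrite lt_neqAle eq_sym mulf_neq0.
Qed.

End Separation.

Lemma exists_separating_line B (C : set pt) c0 p :
  maximal_region (RB B) C -> C c0 -> ~ C p ->
  exists u d, [/\ u != 0, ~ line_meets B u d, forall c, C c -> dot u c < d & d <= dot u p].
Proof.
move=> mC Cc0 nCp; have CR := maximal_region_sub mC.
have [_ [_ [clC cC]]] := mC.1.
have [t t01 nRq] : exists2 t, 0 <= t <= 1 & ~ RB B (lerp c0 p t).
  apply: contrapT => allR; apply: nCp.
  apply: (connected_sub_locally_equal clC (maximal_region_locally_equal mC)
    (@connected_lerp c0 p)).
  - move=> _ [t /= /[!in_itv] t01 <-]; apply: contrapT => nR; apply: allR; by exists t.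
  - by exists c0; split=> //; exists 0; [rewrite /= in_itv /= lexx ler01 | exact: lerp0].
  - by exists 1; [rewrite /= in_itv /= lexx ler01 | exact: lerp1].
have [u [d [u0 qd nl]]] :
    exists u d, [/\ u != 0, on_line u d (lerp c0 p t) & ~ line_meets B u d].
  by move: nRq => /existsNP [u] /existsNP [d] /not_implyP [u0] /not_implyP [qd nl]; exists u, d.
wlog c0d : u d u0 qd nl / dot u c0 < d.
  move=> oriented; have : dot u c0 != d.
    by apply/eqP => c0d; apply: nl; rewrite -c0d; exact: RB_line_meets (CR _ Cc0) u0.
  case: ltgtP => // [c0d | dc0] _; first exact: (oriented u d).
  apply: (oriented (- u) (- d)); rewrite ?oppr_eq0 ?line_meetsN ?dotNl ?ltrN2 //.
  by rewrite /on_line -/(dot _ _) dotNl; congr (- _).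
have C_below : forall c, C c -> dot u c < d.
  apply: (connected_lt (@dot_continuous u) cC); first by exists c0.
  move=> c Cc; apply/eqP => cd; apply: nl; rewrite -cd.
  exact: RB_line_meets (CR _ Cc) u0.
exists u, d; split=> //; rewrite leNgt; apply/negP => pd.
move: qd; rewrite /on_line -/(dot _ _) dot_lerpr => qd.
by have := lerp_lt t01 c0d pd; rewrite qd ltxx.
Qed.

End Plane.

Theorem theorem1 (R : realType) (B : seq ((R * R) * (R * R)))
  (hseg : forall s, s \in B -> s.1 != s.2)
  (hnc : exists a b c, [/\ vertex B a, vertex B b, vertex B c & ~ collinear a b c])
  (C : set (R * R)) (hC : maximal_region (RB B) C) :
  exists H : set (set (R * R)),
    (forall h, H h -> vertex_halfplane B h) /\ C = \bigcap_(h in H) h.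
Proof.
have [[[c0 Cc0] _] _] := hC.
exists [set h | vertex_halfplane B h /\ C `<=` h]; split; first by move=> h [].
apply/seteqP; split; first by move=> x Cx h [_]; apply.
move=> p Hp; apply: contrapT => nCp.
have [u [d [u0 nl C_below dp]]] := exists_separating_line hC Cc0 nCp.
have [h [vh Ch nhp]] :=
  separating_vertex_halfplane (maximal_region_sub hC) Cc0 u0 nl C_below hnc dp.
by apply: nhp; apply: Hp.
Qed.
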